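(* Let $k\in\{1,2\}$, $\xi\in\mathbb{C}$, $f:\mathbb{N}\to[0,\infty)$, and $A=\xi(a^\dagger)^k+\xi^*a^k+f(a^\dagger a)$ with domain $\mathcal{D}_0$. Suppose there exist $C>0$ and $N\in\mathbb{N}$ such that $f(n)\le Cn^{k/2}$ for all $n\ge N$. Then $A$ is essentially self-adjoint.
   Context: $\mathbb{N}=\{0,1,2,\dots\}$. $\mathcal{H}$ is a separable complex Hilbert space with orthonormal basis $(\phi_n)_{n\in\mathbb{N}}$; $\mathcal{D}_0$ is the set of finite linear combinations of the $\phi_n$. The operators $a,a^\dagger$ have domain $\mathcal{D}_0$ and act by $a\phi_n=\sqrt{n}\,\phi_{n-1}$ ($a\phi_0=0$), $a^\dagger\phi_n=\sqrt{n+1}\,\phi_{n+1}$, extended linearly. $f(a^\dagger a)$ has domain $\mathcal{D}_0$ and $f(a^\dagger a)\phi_n=f(n)\phi_n$. *)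

(* concrete reals R, Coquelicot complex numbers C = R * R.
   The Hilbert space H is realised as l^2(N; C) with orthonormal basis
   phi_n = indicator of n.  Operators are represented by their graphs. *)
From Stdlib Require Import Reals.
From Coquelicot Require Import Coquelicot.
Open Scope R_scope.

Definition vec := nat -> C.

Definition l2 (u : vec) : Prop := ex_series (fun n => Cmod (u n) ^ 2).

Definition inner (u v : vec) : C :=
  (Series (fun n => fst (Cmult (Cconj (u n)) (v n))),
   Series (fun n => snd (Cmult (Cconj (u n)) (v n)))).

Definition hnorm (u : vec) : R := sqrt (Series (fun n => Cmod (u n) ^ 2)).

Definition vsub (u v : vec) : vec := fun n => Cminus (u n) (v n).

(* D_0 : finite linear combinations of the phi_n = finitely supported sequences *)
Definition D0 (u : vec) : Prop := exists M : nat, forall n, (M <= n)%nat -> u n = RtoC 0.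

Definition phi (n : nat) : vec := fun m => if Nat.eqb m n then RtoC 1 else RtoC 0.

(* a phi_n = sqrt n phi_{n-1}:  (a u)(m) = sqrt(m+1) u(m+1) *)
Definition ann (u : vec) : vec := fun m => Cmult (RtoC (sqrt (INR (S m)))) (u (S m)).
(* a^dagger phi_n = sqrt(n+1) phi_{n+1} *)
Definition cre (u : vec) : vec := fun m =>
  match m with O => RtoC 0 | S p => Cmult (RtoC (sqrt (INR (S p)))) (u p) end.
(* f(a^dagger a) phi_n = f(n) phi_n *)
Definition fnum (f : nat -> R) (u : vec) : vec := fun m => Cmult (RtoC (f m)) (u m).

Definition op := vec -> vec -> Prop.

Definition opA (k : nat) (xi : C) (f : nat -> R) : op := fun u v =>
  D0 u /\ forall n, v n =
    Cplus (Cplus (Cmult xi (Nat.iter k cre u n))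
                 (Cmult (Cconj xi) (Nat.iter k ann u n)))
          (fnum f u n).

Definition closure (T : op) : op := fun u v =>
  l2 u /\ l2 v /\
  exists (us vs : nat -> vec),
    (forall j, T (us j) (vs j)) /\
    is_lim_seq (fun j => hnorm (vsub (us j) u)) 0 /\
    is_lim_seq (fun j => hnorm (vsub (vs j) v)) 0.

Definition adjoint (T : op) : op := fun v w =>
  l2 v /\ l2 w /\ forall u z, T u z -> inner v z = inner w u.

Definition self_adjoint (T : op) : Prop := forall u v, T u v <-> adjoint T u v.

Definition essentially_self_adjoint (T : op) : Prop := self_adjoint (closure T).

From Stdlib Require Import Reals Lra Lia.
From Coquelicot Require Import Coquelicot.
Open Scope R_scope.

(* A is symmetric on D_0, and testing against the basis vectors shows that its adjoint is the
   maximal operator: u, v in l^2 with v = A u computed coefficientwise.  For a symmetric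
   operator, essential self-adjointness amounts to the adjoint being contained in the closure.
   Given such a pair (u, v), the truncations chi_J u, where chi_J = 1 on [0, J] and decreases
   linearly to 0 on [J, 2J], lie in D_0 and tend to u, and
   A (chi_J u) = chi_J v + xi [(a^dagger)^k, chi_J] u + xi^* [a^k, chi_J] u.
   The commutator entries have size n^(k/2) * k/J with n < 2J, uniformly bounded since k <= 2,
   and vanish for n <= J - k; dominated convergence gives A (chi_J u) -> v. *)

Lemma ex_series_nonneg_le (a b : nat -> R) :
  (forall n, 0 <= a n <= b n) -> ex_series b -> ex_series a.
Proof.
  intros Hab Hb. apply (@ex_series_le R_AbsRing R_CompleteNormedModule) with b; auto.
  intros n. change norm with Rabs. simpl. rewrite Rabs_pos_eq; apply Hab.
Qed.

Lemma Series_const0 : Series (fun _ : nat => 0) = 0.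
Proof.
  rewrite <- (Series_ext (fun n => 0 * 0)) by (intros; ring).
  rewrite Series_scal_l. ring.
Qed.

Lemma ex_series_eventually_zero (a : nat -> R) (M : nat) :
  (forall n, (M <= n)%nat -> a n = 0) -> ex_series a.
Proof.
  intros Ha. apply (ex_series_incr_n a M).
  apply ex_series_ext with (fun _ => 0); [intros n; rewrite Ha by lia; auto |].
  exists 0. change (is_lim_seq (sum_n (fun _ => 0)) 0).
  apply is_lim_seq_ext with (fun _ => 0); [| apply is_lim_seq_const].
  intros n. rewrite sum_n_const. ring.
Qed.

Lemma Series_nonneg (a : nat -> R) : (forall n, 0 <= a n) -> ex_series a -> 0 <= Series a.
Proof.
  intros Ha Hex. rewrite <- Series_const0. apply Series_le; auto.
  intros n; split; [lra | auto].
Qed.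

Lemma Series_indicator (m : nat) (c : R) :
  Series (fun n => if Nat.eqb n m then c else 0) = c.
Proof.
  rewrite (Series_incr_n_aux _ m).
  2:{ intros n Hn. destruct (Nat.eqb_spec n m); [lia | auto]. }
  rewrite Series_incr_1.
  - rewrite Nat.add_0_r, Nat.eqb_refl, (Series_ext _ (fun _ => 0)), Series_const0; [ring |].
    intros n. destruct (Nat.eqb_spec (m + S n) m); [lia | auto].
  - apply ex_series_eventually_zero with 1%nat. intros n Hn.
    destruct (Nat.eqb_spec (m + n) m); [lia | auto].
Qed.

Lemma Series_ge_term (a : nat -> R) (m : nat) :
  (forall n, 0 <= a n) -> ex_series a -> a m <= Series a.
Proof.
  intros Ha Hex. rewrite <- (Series_indicator m (a m)). apply Series_le; auto.
  intros n. destruct (Nat.eqb_spec n m); [subst | split]; auto with real.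
Qed.

Lemma is_lim_seq_Series_tail (a : nat -> R) :
  ex_series a -> is_lim_seq (fun j => Series (fun n => a (j + n)%nat)) 0.
Proof.
  intros Ha. apply is_lim_seq_incr_1.
  apply is_lim_seq_ext with (fun j => Series a - sum_n a j).
  - intros j. rewrite (Series_incr_n a (S j)) by (lia || auto).
    rewrite <- sum_n_Reals. simpl pred. ring.
  - replace 0 with (Series a - Series a) by ring.
    apply is_lim_seq_minus'; [apply is_lim_seq_const | apply Series_correct, Ha].
Qed.

Lemma is_lim_seq_Series_dominated (s : nat -> nat -> R) (w : nat -> R) :
  ex_series w -> (forall j n, 0 <= s j n <= w n) ->
  (forall j n, (n < j)%nat -> s j n = 0) ->
  is_lim_seq (fun j => Series (s j)) 0.
Proof.
  intros Hw Hsw Hlow.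
  apply is_lim_seq_le_le with (fun _ => 0) (fun j => Series (fun n => w (j + n)%nat));
    [| apply is_lim_seq_const | apply is_lim_seq_Series_tail, Hw].
  intros j. assert (Htail : ex_series (fun n => w (j + n)%nat)) by apply ex_series_incr_n, Hw.
  rewrite (Series_incr_n_aux (s j) j) by auto. split.
  - apply Series_nonneg; [intros; apply Hsw |].
    apply ex_series_nonneg_le with (fun n => w (j + n)%nat); auto.
  - apply Series_le; auto.
Qed.

Lemma is_lim_seq_sqrt0 (u : nat -> R) : is_lim_seq u 0 -> is_lim_seq (fun j => sqrt (u j)) 0.
Proof.
  intros Hu. rewrite <- sqrt_0.
  apply (filterlim_comp _ _ _ u sqrt eventually (locally 0)); [exact Hu | apply continuous_sqrt].
Qed.

Lemma is_lim_seq_of_Rabs_le (x d : nat -> R) (l : R) :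
  (forall i, Rabs (x i - l) <= d i) -> is_lim_seq d 0 -> is_lim_seq x l.
Proof.
  intros Hxd Hd.
  apply is_lim_seq_le_le with (fun i => l - d i) (fun i => l + d i).
  - intros i. specialize (Hxd i). unfold Rabs in Hxd. destruct Rcase_abs; lra.
  - replace (Finite l) with (Rbar_minus l 0) by (simpl; f_equal; ring).
    apply is_lim_seq_minus'; [apply is_lim_seq_const | exact Hd].
  - replace (Finite l) with (Rbar_plus l 0) by (simpl; f_equal; ring).
    apply is_lim_seq_plus'; [apply is_lim_seq_const | exact Hd].
Qed.

Lemma l2_vsub (u v : vec) : l2 u -> l2 v -> l2 (vsub u v).
Proof.
  intros Hu Hv.
  apply ex_series_nonneg_le with (fun n => 2 * Cmod (u n) ^ 2 + 2 * Cmod (v n) ^ 2).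
  - intros n. split; [apply pow2_ge_0 |].
    pose proof (Cmod_triangle (u n) (Copp (v n))) as Htri. rewrite Cmod_opp in Htri.
    pose proof (Cmod_ge_0 (u n + - v n)%C) as Hd.
    pose proof (pow2_ge_0 (Cmod (u n) - Cmod (v n))).
    assert (Cmod (u n + - v n)%C ^ 2 <= (Cmod (u n) + Cmod (v n)) ^ 2) by (apply pow_incr; lra).
    unfold vsub, Cminus. nra.
  - apply (ex_series_plus (fun n => 2 * Cmod (u n) ^ 2) (fun n => 2 * Cmod (v n) ^ 2));
      apply (@ex_series_scal_l R_AbsRing R_NormedModule); assumption.
Qed.

Lemma l2_D0 (u : vec) : D0 u -> l2 u.
Proof.
  intros [M HM]. apply ex_series_eventually_zero with M.
  intros n Hn. rewrite HM by exact Hn. rewrite Cmod_0. ring.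
Qed.

Lemma hnorm_sq (u : vec) : l2 u -> hnorm u ^ 2 = Series (fun n => Cmod (u n) ^ 2).
Proof.
  intros Hu. apply pow2_sqrt, Series_nonneg; [intros; apply pow2_ge_0 | exact Hu].
Qed.

Lemma Cmod_le_hnorm (u : vec) (n : nat) : l2 u -> Cmod (u n) <= hnorm u.
Proof.
  intros Hu. rewrite <- (sqrt_pow2 (Cmod (u n))) by apply Cmod_ge_0.
  apply sqrt_le_1_alt, (Series_ge_term (fun m => Cmod (u m) ^ 2)); auto using pow2_ge_0.
Qed.

Lemma ex_series_Cmod_mult (a b : vec) :
  l2 a -> l2 b -> ex_series (fun n => Cmod (a n) * Cmod (b n)).
Proof.
  intros Ha Hb.
  apply ex_series_nonneg_le with (fun n => / 2 * Cmod (a n) ^ 2 + / 2 * Cmod (b n) ^ 2).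
  - intros n. pose proof (Cmod_ge_0 (a n)). pose proof (Cmod_ge_0 (b n)).
    pose proof (pow2_ge_0 (Cmod (a n) - Cmod (b n))). split; nra.
  - apply (ex_series_plus (fun n => / 2 * Cmod (a n) ^ 2) (fun n => / 2 * Cmod (b n) ^ 2));
      apply (@ex_series_scal_l R_AbsRing R_NormedModule); assumption.
Qed.

Lemma hnorm_eq0 (a : vec) (n : nat) : l2 a -> hnorm a = 0 -> a n = 0.
Proof.
  intros Ha H0. apply Cmod_eq_0, Rle_antisym; [| apply Cmod_ge_0].
  rewrite <- H0. apply Cmod_le_hnorm, Ha.
Qed.

Lemma l2_Cauchy_Schwarz (a b : vec) : l2 a -> l2 b ->
  Series (fun n => Cmod (a n) * Cmod (b n)) <= hnorm a * hnorm b.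
Proof.
  intros Ha Hb.
  assert (Hna : 0 <= hnorm a) by apply sqrt_pos.
  assert (Hnb : 0 <= hnorm b) by apply sqrt_pos.
  destruct (Req_dec (hnorm a) 0) as [Ha0 | Ha0].
  { rewrite (Series_ext _ (fun _ => 0)), Series_const0; [nra |].
    intros n. rewrite (hnorm_eq0 a n Ha Ha0), Cmod_0. ring. }
  destruct (Req_dec (hnorm b) 0) as [Hb0 | Hb0].
  { rewrite (Series_ext _ (fun _ => 0)), Series_const0; [nra |].
    intros n. rewrite (hnorm_eq0 b n Hb Hb0), Cmod_0. ring. }
  set (A := hnorm a) in *. set (B := hnorm b) in *.
  (* AM-GM with weights chosen so that both sides become [A * B] *)
  apply Rle_trans with
    (Series (fun n => B / (2 * A) * Cmod (a n) ^ 2 + A / (2 * B) * Cmod (b n) ^ 2)).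
  - apply Series_le.
    + intros n. pose proof (Cmod_ge_0 (a n)). pose proof (Cmod_ge_0 (b n)).
      split; [nra |].
      pose proof (pow2_ge_0 (B * Cmod (a n) - A * Cmod (b n))).
      apply Rmult_le_reg_l with (2 * A * B); [nra |].
      field_simplify; [nra | lra].
    + apply (ex_series_plus (fun n => B / (2 * A) * Cmod (a n) ^ 2)
                            (fun n => A / (2 * B) * Cmod (b n) ^ 2));
        apply (@ex_series_scal_l R_AbsRing R_NormedModule); assumption.
  - rewrite Series_plus, !Series_scal_l, <- !hnorm_sq by
      (auto; apply (@ex_series_scal_l R_AbsRing R_NormedModule); assumption).
    fold A B. right. field. lra.
Qed.

Definition Cseries (s : nat -> C) : C :=
  (Series (fun n => fst (s n)), Series (fun n => snd (s n))).

Definition ex_Cseries (s : nat -> C) : Prop :=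
  ex_series (fun n => fst (s n)) /\ ex_series (fun n => snd (s n)).

Lemma inner_Cseries (u v : vec) : inner u v = Cseries (fun n => Cmult (Cconj (u n)) (v n)).
Proof. reflexivity. Qed.

Lemma Cseries_ext (s t : nat -> C) : (forall n, s n = t n) -> Cseries s = Cseries t.
Proof. intros Hst. unfold Cseries. f_equal; apply Series_ext; intros n; rewrite Hst; auto. Qed.

Lemma ex_Cseries_D0 (s : nat -> C) : D0 s -> ex_Cseries s.
Proof.
  intros [M HM]. split; apply ex_series_eventually_zero with M;
    intros n Hn; rewrite HM by exact Hn; reflexivity.
Qed.

Lemma Cseries_Cmod_le (s : nat -> C) (b : nat -> R) :
  (forall n, Cmod (s n) <= b n) -> ex_series b ->
  ex_Cseries s /\
  Rabs (fst (Cseries s)) <= Series b /\ Rabs (snd (Cseries s)) <= Series b.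
Proof.
  intros Hsb Hb.
  assert (Hfst : forall n, Rabs (fst (s n)) <= b n).
  { intros n. eapply Rle_trans; [| apply Hsb].
    eapply Rle_trans; [| apply Rmax_Cmod]. apply Rmax_l. }
  assert (Hsnd : forall n, Rabs (snd (s n)) <= b n).
  { intros n. eapply Rle_trans; [| apply Hsb].
    eapply Rle_trans; [| apply Rmax_Cmod]. apply Rmax_r. }
  assert (Hafst : ex_series (fun n => Rabs (fst (s n)))).
  { apply ex_series_nonneg_le with b; auto. intros n. split; [apply Rabs_pos | apply Hfst]. }
  assert (Hasnd : ex_series (fun n => Rabs (snd (s n)))).
  { apply ex_series_nonneg_le with b; auto. intros n. split; [apply Rabs_pos | apply Hsnd]. }
  split; [split; apply ex_series_Rabs; assumption |]. split.
  - eapply Rle_trans; [apply Series_Rabs, Hafst |].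
    apply Series_le; auto. intros n. split; [apply Rabs_pos | apply Hfst].
  - eapply Rle_trans; [apply Series_Rabs, Hasnd |].
    apply Series_le; auto. intros n. split; [apply Rabs_pos | apply Hsnd].
Qed.

Lemma Cseries_plus (s t : nat -> C) : ex_Cseries s -> ex_Cseries t ->
  Cseries (fun n => Cplus (s n) (t n)) = Cplus (Cseries s) (Cseries t).
Proof.
  intros [Hs1 Hs2] [Ht1 Ht2]. unfold Cseries, Cplus. simpl.
  f_equal; rewrite <- Series_plus by assumption; apply Series_ext; reflexivity.
Qed.

Lemma Cseries_minus (s t : nat -> C) : ex_Cseries s -> ex_Cseries t ->
  Cseries (fun n => Cminus (s n) (t n)) = Cminus (Cseries s) (Cseries t).
Proof.
  intros [Hs1 Hs2] [Ht1 Ht2]. apply injective_projections; simpl.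
  - transitivity (Series (fun n => fst (s n)) - Series (fun n => fst (t n))); [| ring].
    rewrite <- Series_minus by assumption. apply Series_ext. intros n. simpl. ring.
  - transitivity (Series (fun n => snd (s n)) - Series (fun n => snd (t n))); [| ring].
    rewrite <- Series_minus by assumption. apply Series_ext. intros n. simpl. ring.
Qed.

Lemma Cseries_scal (c : C) (s : nat -> C) : ex_Cseries s ->
  Cseries (fun n => Cmult c (s n)) = Cmult c (Cseries s).
Proof.
  intros [Hs1 Hs2]. destruct c as [a b].
  assert (Hscal : forall (r : R) (x : nat -> R), ex_series x -> ex_series (fun n => r * x n))
    by (intros; apply (@ex_series_scal_l R_AbsRing R_NormedModule); assumption).
  apply injective_projections; simpl.
  - transitivity (a * Series (fun n => fst (s n)) - b * Series (fun n => snd (s n))); [| ring].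
    rewrite <- !Series_scal_l, <- Series_minus by auto.
    apply Series_ext. intros n. simpl. ring.
  - transitivity (a * Series (fun n => snd (s n)) + b * Series (fun n => fst (s n))); [| ring].
    rewrite <- !Series_scal_l, <- Series_plus by auto.
    apply Series_ext. intros n. simpl. ring.
Qed.

Lemma Cseries_incr_1 (s : nat -> C) : ex_Cseries s ->
  Cseries s = Cplus (s O) (Cseries (fun n => s (S n))).
Proof.
  intros [Hs1 Hs2]. unfold Cseries, Cplus. simpl.
  rewrite (Series_incr_1 (fun n => fst (s n))), (Series_incr_1 (fun n => snd (s n))) by assumption.
  reflexivity.
Qed.

Lemma inner_conj_sym (a b : vec) : inner a b = Cconj (inner b a).
Proof.
  unfold inner, Cconj. simpl. f_equal.
  - apply Series_ext. intros n. simpl. ring.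
  - rewrite <- Series_opp. apply Series_ext. intros n. simpl. ring.
Qed.

Lemma inner_components_le (a w : vec) : l2 a -> l2 w ->
  ex_Cseries (fun n => Cmult (Cconj (a n)) (w n)) /\
  Rabs (fst (inner a w)) <= hnorm a * hnorm w /\ Rabs (snd (inner a w)) <= hnorm a * hnorm w.
Proof.
  intros Ha Hw.
  destruct (Cseries_Cmod_le (fun n => Cmult (Cconj (a n)) (w n))
              (fun n => Cmod (a n) * Cmod (w n))) as [Hex [Hfst Hsnd]].
  - intros n. rewrite Cmod_mult, Cmod_conj. lra.
  - apply ex_series_Cmod_mult; assumption.
  - pose proof (l2_Cauchy_Schwarz a w Ha Hw). rewrite <- inner_Cseries in Hfst, Hsnd.
    split; [exact Hex | split; lra].
Qed.

Lemma inner_vsub_r (a z z' : vec) : l2 a -> l2 z -> l2 z' ->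
  inner a (vsub z' z) = Cminus (inner a z') (inner a z).
Proof.
  intros Ha Hz Hz'. rewrite !inner_Cseries, <- Cseries_minus.
  - apply Cseries_ext. intros n. unfold vsub. ring.
  - apply inner_components_le; assumption.
  - apply inner_components_le; assumption.
Qed.

Lemma is_lim_seq_inner_r (a z : vec) (zs : nat -> vec) :
  l2 a -> l2 z -> (forall i, l2 (zs i)) ->
  is_lim_seq (fun i => hnorm (vsub (zs i) z)) 0 ->
  is_lim_seq (fun i => fst (inner a (zs i))) (fst (inner a z)) /\
  is_lim_seq (fun i => snd (inner a (zs i))) (snd (inner a z)).
Proof.
  intros Ha Hz Hzs Hlim.
  assert (Hd : is_lim_seq (fun i => hnorm a * hnorm (vsub (zs i) z)) 0).
  { replace (Finite 0) with (Rbar_mult (hnorm a) 0) by (simpl; f_equal; ring).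
    apply is_lim_seq_scal_l, Hlim. }
  assert (Hdiff : forall i, inner a (vsub (zs i) z) = Cminus (inner a (zs i)) (inner a z))
    by (intros; apply inner_vsub_r; auto).
  split; apply is_lim_seq_of_Rabs_le with (2 := Hd); intros i.
  - pose proof (inner_components_le a _ Ha (l2_vsub _ _ (Hzs i) Hz)) as [_ [Hb _]].
    rewrite Hdiff in Hb. exact Hb.
  - pose proof (inner_components_le a _ Ha (l2_vsub _ _ (Hzs i) Hz)) as [_ [_ Hb]].
    rewrite Hdiff in Hb. exact Hb.
Qed.

Lemma inner_eq_of_lim (a b z w : vec) (zs ws : nat -> vec) :
  l2 a -> l2 b -> l2 z -> l2 w -> (forall i, l2 (zs i)) -> (forall i, l2 (ws i)) ->
  is_lim_seq (fun i => hnorm (vsub (zs i) z)) 0 ->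
  is_lim_seq (fun i => hnorm (vsub (ws i) w)) 0 ->
  (forall i, inner a (zs i) = inner b (ws i)) -> inner a z = inner b w.
Proof.
  intros Ha Hb Hz Hw Hzs Hws Hzlim Hwlim Heq.
  destruct (is_lim_seq_inner_r a z zs Ha Hz Hzs Hzlim) as [Hz1 Hz2].
  destruct (is_lim_seq_inner_r b w ws Hb Hw Hws Hwlim) as [Hw1 Hw2].
  assert (Hunique : forall (x y : nat -> R) (l m : R),
            (forall i, x i = y i) -> is_lim_seq x l -> is_lim_seq y m -> l = m).
  { intros x y l m Hxy Hx Hy. apply is_lim_seq_unique in Hx, Hy.
    rewrite (Lim_seq_ext _ _ Hxy), Hy in Hx. congruence. }
  apply injective_projections.
  - apply (Hunique _ _ _ _ (fun i => f_equal fst (Heq i)) Hz1 Hw1).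
  - apply (Hunique _ _ _ _ (fun i => f_equal snd (Heq i)) Hz2 Hw2).
Qed.

Lemma hnorm_vsub_diag (u : vec) : hnorm (vsub u u) = 0.
Proof.
  unfold hnorm. rewrite (Series_ext _ (fun _ => 0)), Series_const0; [apply sqrt_0 |].
  intros n. unfold vsub. replace (Cminus (u n) (u n)) with (RtoC 0) by ring.
  rewrite Cmod_0. ring.
Qed.

(** * Symmetric operators *)

Lemma closure_of_graph (T : op) (u v : vec) : T u v -> l2 u -> l2 v -> closure T u v.
Proof.
  intros Huv Hu Hv. split; [exact Hu | split; [exact Hv |]].
  exists (fun _ => u), (fun _ => v). rewrite !hnorm_vsub_diag.
  split; [auto | split; apply is_lim_seq_const].
Qed.

Definition symmetric (T : op) : Prop := forall u v, T u v -> adjoint T u v.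

Section SymmetricOperator.

Variable T : op.
Hypothesis T_symmetric : symmetric T.

Lemma symmetric_l2 (u v : vec) : T u v -> l2 u /\ l2 v.
Proof. intros Huv. destruct (T_symmetric u v Huv) as [Hu [Hv _]]. split; assumption. Qed.

Lemma adjoint_closure_sub (u v : vec) : adjoint (closure T) u v -> adjoint T u v.
Proof.
  intros [Hu [Hv Hadj]]. split; [exact Hu | split; [exact Hv |]].
  intros x y Hxy. destruct (symmetric_l2 x y Hxy). apply Hadj, closure_of_graph; assumption.
Qed.

Lemma adjoint_sub_adjoint_closure (u v : vec) : adjoint T u v -> adjoint (closure T) u v.
Proof.
  intros [Hu [Hv Hadj]]. split; [exact Hu | split; [exact Hv |]].
  intros x y [Hx [Hy [xs [ys [Hseq [Hxlim Hylim]]]]]].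
  apply inner_eq_of_lim with ys xs; auto; intros i; apply (symmetric_l2 _ _ (Hseq i)).
Qed.

(* Pass to the limit in [<us i, y> = <vs i, x>]. *)
Lemma closure_sub_adjoint (u v : vec) : closure T u v -> adjoint T u v.
Proof.
  intros [Hu [Hv [us [vs [Hseq [Hulim Hvlim]]]]]]. split; [exact Hu | split; [exact Hv |]].
  intros x y Hxy. destruct (symmetric_l2 x y Hxy) as [Hx Hy].
  rewrite (inner_conj_sym u y), (inner_conj_sym v x). f_equal.
  apply inner_eq_of_lim with us vs; auto; try (intros i; apply (symmetric_l2 _ _ (Hseq i))).
  intros i. destruct (T_symmetric _ _ (Hseq i)) as [_ [_ Hsym]].
  rewrite (inner_conj_sym y), (inner_conj_sym x), (Hsym x y Hxy). reflexivity.
Qed.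

Lemma essentially_self_adjoint_of_adjoint_sub_closure :
  (forall u v, adjoint T u v -> closure T u v) -> essentially_self_adjoint T.
Proof.
  intros Hmax u v. split.
  - intros Huv. apply adjoint_sub_adjoint_closure, closure_sub_adjoint, Huv.
  - intros Huv. apply Hmax, adjoint_closure_sub, Huv.
Qed.

End SymmetricOperator.

(** * The operator A and its adjoint *)

(* The expression defining [opA], for an arbitrary sequence: [opA k xi f u v] is convertibly
   [D0 u /\ forall n, v n = Aform k xi f u n]. *)
Definition Aform (k : nat) (xi : C) (f : nat -> R) (u : vec) : vec := fun n =>
  Cplus (Cplus (Cmult xi (Nat.iter k cre u n)) (Cmult (Cconj xi) (Nat.iter k ann u n)))
        (fnum f u n).

Lemma D0_cre (u : vec) : D0 u -> D0 (cre u).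
Proof.
  intros [M HM]. exists (S M). intros [|n] Hn; simpl; [reflexivity |]. rewrite HM by lia. ring.
Qed.

Lemma D0_ann (u : vec) : D0 u -> D0 (ann u).
Proof. intros [M HM]. exists M. intros n Hn. unfold ann. rewrite HM by lia. ring. Qed.

Lemma D0_mult (c : nat -> C) (u : vec) : D0 u -> D0 (fun n => Cmult (c n) (u n)).
Proof. intros [M HM]. exists M. intros n Hn. rewrite HM by exact Hn. ring. Qed.

Lemma D0_plus (u v : vec) : D0 u -> D0 v -> D0 (fun n => Cplus (u n) (v n)).
Proof. intros [M HM] [N HN]. exists (M + N)%nat. intros n Hn. rewrite HM, HN by lia. ring. Qed.

Lemma D0_Aform (k : nat) (xi : C) (f : nat -> R) (u : vec) : D0 u -> D0 (Aform k xi f u).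
Proof.
  intros Hu. apply D0_plus; [apply D0_plus |]; apply D0_mult; auto.
  - apply Nat.iter_invariant; auto using D0_cre.
  - apply Nat.iter_invariant; auto using D0_ann.
Qed.

Lemma Cconj_RtoC (r : R) : Cconj (RtoC r) = RtoC r.
Proof. unfold Cconj, RtoC. simpl. f_equal. ring. Qed.

Lemma inner_cre_r (u x : vec) : D0 x -> inner u (cre x) = inner (ann u) x.
Proof.
  intros Hx. rewrite !inner_Cseries, Cseries_incr_1 by apply ex_Cseries_D0, D0_mult, D0_cre, Hx.
  cbn [cre]. rewrite Cmult_0_r, Cplus_0_l.
  apply Cseries_ext. intros n. unfold ann. rewrite Cmult_conj, Cconj_RtoC. ring.
Qed.

Lemma inner_ann_r (u x : vec) : D0 x -> inner u (ann x) = inner (cre u) x.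
Proof.
  intros Hx. rewrite !inner_Cseries, (Cseries_incr_1 (fun n => Cmult (Cconj (cre u n)) (x n)))
    by apply ex_Cseries_D0, D0_mult, Hx.
  cbn [cre]. rewrite Cconj_RtoC, Cmult_0_l, Cplus_0_l.
  apply Cseries_ext. intros n. unfold ann. rewrite Cmult_conj, Cconj_RtoC. ring.
Qed.

Lemma inner_iter_cre_r (k : nat) (u x : vec) : D0 x ->
  inner u (Nat.iter k cre x) = inner (Nat.iter k ann u) x.
Proof.
  revert u. induction k as [|k IH]; intros u Hx; [reflexivity |].
  rewrite Nat.iter_succ, inner_cre_r, IH, <- Nat.iter_succ_r by
    (auto; apply Nat.iter_invariant; auto using D0_cre).
  reflexivity.
Qed.

Lemma inner_iter_ann_r (k : nat) (u x : vec) : D0 x ->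
  inner u (Nat.iter k ann x) = inner (Nat.iter k cre u) x.
Proof.
  revert u. induction k as [|k IH]; intros u Hx; [reflexivity |].
  rewrite Nat.iter_succ, inner_ann_r, IH, <- Nat.iter_succ_r by
    (auto; apply Nat.iter_invariant; auto using D0_ann).
  reflexivity.
Qed.

Lemma Cseries_lincomb (a b : C) (s t r : nat -> C) : D0 s -> D0 t -> D0 r ->
  Cseries (fun n => Cplus (Cplus (Cmult a (s n)) (Cmult b (t n))) (r n)) =
  Cplus (Cplus (Cmult a (Cseries s)) (Cmult b (Cseries t))) (Cseries r).
Proof.
  intros Hs Ht Hr.
  assert (Hscal : forall (c : C) (w : nat -> C), D0 w -> D0 (fun n => Cmult c (w n)))
    by (intros c w; apply (D0_mult (fun _ => c))).
  rewrite Cseries_plus, Cseries_plus, !Cseries_scal; auto using ex_Cseries_D0, D0_plus.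
Qed.

Lemma inner_Aform_r (k : nat) (xi : C) (f : nat -> R) (u x : vec) : D0 x ->
  inner u (Aform k xi f x) = inner (Aform k xi f u) x.
Proof.
  intros Hx.
  assert (Hcre : D0 (Nat.iter k cre x)) by (apply Nat.iter_invariant; auto using D0_cre).
  assert (Hann : D0 (Nat.iter k ann x)) by (apply Nat.iter_invariant; auto using D0_ann).
  rewrite !inner_Cseries.
  rewrite (Cseries_ext _ (fun n =>
    Cplus (Cplus (Cmult xi (Cmult (Cconj (u n)) (Nat.iter k cre x n)))
                 (Cmult (Cconj xi) (Cmult (Cconj (u n)) (Nat.iter k ann x n))))
          (Cmult (Cconj (fnum f u n)) (x n)))).
  2:{ intros n. unfold Aform, fnum. rewrite Cmult_conj, Cconj_RtoC. ring. }
  rewrite (Cseries_ext (fun n => Cmult (Cconj (Aform k xi f u n)) (x n)) (fun n =>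
    Cplus (Cplus (Cmult (Cconj xi) (Cmult (Cconj (Nat.iter k cre u n)) (x n)))
                 (Cmult xi (Cmult (Cconj (Nat.iter k ann u n)) (x n))))
          (Cmult (Cconj (fnum f u n)) (x n)))).
  2:{ intros n. unfold Aform. rewrite !Cplus_conj, !Cmult_conj, Cconj_conj. ring. }
  rewrite !Cseries_lincomb by auto using D0_mult.
  rewrite <- !inner_Cseries, inner_iter_cre_r, inner_iter_ann_r by exact Hx.
  ring.
Qed.

Lemma inner_ext (u u' z z' : vec) :
  (forall n, u n = u' n) -> (forall n, z n = z' n) -> inner u z = inner u' z'.
Proof.
  intros Hu Hz. rewrite !inner_Cseries. apply Cseries_ext. intros n. rewrite Hu, Hz. reflexivity.
Qed.

Lemma opA_D0 (k : nat) (xi : C) (f : nat -> R) (x y : vec) :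
  opA k xi f x y -> D0 x /\ D0 y.
Proof.
  intros [Hx Hy]. split; [exact Hx |].
  destruct (D0_Aform k xi f x Hx) as [M HM]. exists M. intros n Hn. rewrite Hy. apply HM, Hn.
Qed.

Lemma opA_symmetric (k : nat) (xi : C) (f : nat -> R) : symmetric (opA k xi f).
Proof.
  intros x y Hxy. destruct (opA_D0 _ _ _ _ _ Hxy) as [Hx Hy].
  split; [apply l2_D0, Hx | split; [apply l2_D0, Hy |]].
  intros x' y' Hx'y'. destruct (opA_D0 _ _ _ _ _ Hx'y') as [Hx' _].
  rewrite (inner_ext x x y' (Aform k xi f x')), inner_Aform_r by (apply Hx'y' || auto).
  apply inner_ext; [symmetry; apply Hxy | reflexivity].
Qed.

Lemma D0_phi (n : nat) : D0 (phi n).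
Proof. exists (S n). intros m Hm. unfold phi. destruct (Nat.eqb_spec m n); [lia | reflexivity]. Qed.

Lemma inner_phi_r (w : vec) (n : nat) : inner w (phi n) = Cconj (w n).
Proof.
  rewrite inner_Cseries.
  rewrite (Cseries_ext _ (fun m => if Nat.eqb m n then Cconj (w n) else RtoC 0)).
  - unfold Cseries. apply injective_projections; cbn [fst snd].
    + rewrite <- (Series_indicator n (fst (Cconj (w n)))).
      apply Series_ext. intros m. destruct (Nat.eqb m n); reflexivity.
    + rewrite <- (Series_indicator n (snd (Cconj (w n)))).
      apply Series_ext. intros m. destruct (Nat.eqb m n); reflexivity.
  - intros m. unfold phi. destruct (Nat.eqb_spec m n); [subst |]; ring.
Qed.

Lemma adjoint_opA_Aform (k : nat) (xi : C) (f : nat -> R) (u v : vec) :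
  adjoint (opA k xi f) u v -> forall n, v n = Aform k xi f u n.
Proof.
  intros [_ [_ Hadj]] n.
  specialize (Hadj (phi n) (Aform k xi f (phi n)) (conj (D0_phi n) (fun _ => eq_refl))).
  rewrite inner_Aform_r, !inner_phi_r in Hadj by apply D0_phi.
  rewrite <- (Cconj_conj (v n)), <- Hadj. apply Cconj_conj.
Qed.

(** * Cutoff approximation *)

Definition clip (x : R) : R := Rmin 1 (Rmax 0 x).

Definition chi (J n : nat) : R := clip (2 - INR n / INR J).

Lemma chi_bounds (J n : nat) : 0 <= chi J n <= 1.
Proof. unfold chi, clip, Rmin, Rmax. repeat destruct Rle_dec; lra. Qed.

Lemma chi_eq1 (J n : nat) : (1 <= J)%nat -> (n <= J)%nat -> chi J n = 1.
Proof.
  intros HJ Hn. unfold chi, clip.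
  assert (HJ0 : 0 < INR J) by (apply lt_0_INR; lia).
  assert (INR n / INR J <= 1).
  { apply Rmult_le_reg_r with (INR J); [exact HJ0 |].
    field_simplify; [apply le_INR, Hn | lra]. }
  unfold Rmin, Rmax. repeat destruct Rle_dec; lra.
Qed.

Lemma chi_eq0 (J n : nat) : (1 <= J)%nat -> (2 * J <= n)%nat -> chi J n = 0.
Proof.
  intros HJ Hn. unfold chi, clip.
  assert (HJ0 : 0 < INR J) by (apply lt_0_INR; lia).
  assert (2 <= INR n / INR J).
  { apply Rmult_le_reg_r with (INR J); [exact HJ0 |]. field_simplify; [| lra].
    replace (2 * INR J) with (INR (2 * J)) by (rewrite mult_INR; reflexivity).
    apply le_INR, Hn. }
  unfold Rmin, Rmax. repeat destruct Rle_dec; lra.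
Qed.

Lemma chi_lipschitz (J m k : nat) : (1 <= J)%nat ->
  INR J * Rabs (chi J (m + k) - chi J m) <= INR k.
Proof.
  intros HJ. assert (HJ0 : 0 < INR J) by (apply lt_0_INR; lia).
  assert (Hclip : forall x y, Rabs (clip x - clip y) <= Rabs (x - y)).
  { intros x y. unfold clip, Rmin, Rmax.
    repeat destruct Rle_dec; unfold Rabs; repeat destruct Rcase_abs; lra. }
  apply Rle_trans with (INR J * Rabs (INR k / INR J)).
  - apply Rmult_le_compat_l; [lra |]. unfold chi.
    replace (INR k / INR J) with (2 - INR m / INR J - (2 - INR (m + k) / INR J))
      by (rewrite plus_INR; field; lra).
    rewrite Rabs_minus_sym. apply Hclip.
  - rewrite Rabs_pos_eq by (apply Rdiv_le_0_compat; [apply pos_INR | exact HJ0]).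
    right. field. lra.
Qed.

(* [ladder k m = sqrt ((m + 1) ... (m + k))], the matrix entry of [a^k] from [phi_(m+k)]
   to [phi_m]. *)
Fixpoint ladder (k m : nat) : R :=
  match k with
  | O => 1
  | S k' => sqrt (INR (S m)) * ladder k' (S m)
  end.

Lemma ladder_nonneg (k m : nat) : 0 <= ladder k m.
Proof.
  revert m. induction k as [|k IH]; intros m; simpl; [lra |].
  apply Rmult_le_pos; [apply sqrt_pos | apply IH].
Qed.

Lemma ladder_succ_r (k m : nat) : ladder (S k) m = ladder k m * sqrt (INR (S (m + k))).
Proof.
  revert m. induction k as [|k IH]; intros m.
  - cbn [ladder]. rewrite Nat.add_0_r. ring.
  - change (ladder (S (S k)) m) with (sqrt (INR (S m)) * ladder (S k) (S m)).
    rewrite IH, Nat.add_succ_r. cbn [ladder]. rewrite Nat.add_succ_l. ring.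
Qed.

Lemma ladder_sq_le (k m : nat) : ladder k m ^ 2 <= INR (m + k) ^ k.
Proof.
  revert m. induction k as [|k IH]; intros m; [cbn; lra |].
  change (ladder (S k) m) with (sqrt (INR (S m)) * ladder k (S m)).
  rewrite Rpow_mult_distr, pow2_sqrt by apply pos_INR.
  rewrite <- Nat.add_succ_comm. cbn [pow].
  apply Rmult_le_compat; [apply pos_INR | apply pow2_ge_0 | apply le_INR; lia | apply IH].
Qed.

Lemma iter_ann_ladder (k : nat) (u : vec) (m : nat) :
  Nat.iter k ann u m = Cmult (RtoC (ladder k m)) (u (m + k)%nat).
Proof.
  revert m. induction k as [|k IH]; intros m.
  - cbn. rewrite Nat.add_0_r. ring.
  - rewrite Nat.iter_succ. unfold ann. rewrite IH, Nat.add_succ_r, <- Nat.add_succ_l.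
    cbn [ladder]. rewrite RtoC_mult. ring.
Qed.

Lemma iter_cre_ladder (k : nat) (u : vec) (m : nat) :
  Nat.iter k cre u (m + k)%nat = Cmult (RtoC (ladder k m)) (u m).
Proof.
  induction k as [|k IH].
  - cbn. rewrite Nat.add_0_r. ring.
  - rewrite Nat.iter_succ, Nat.add_succ_r. cbn [cre]. rewrite IH, ladder_succ_r, RtoC_mult. ring.
Qed.

Lemma iter_cre_below (k : nat) (u : vec) (n : nat) : (n < k)%nat -> Nat.iter k cre u n = RtoC 0.
Proof.
  revert n. induction k as [|k IH]; intros n Hn; [lia |].
  rewrite Nat.iter_succ. destruct n as [|p]; cbn [cre]; [reflexivity |].
  rewrite IH by lia. ring.
Qed.

Definition comm_coef (J k m : nat) : R := ladder k m * (chi J (m + k) - chi J m).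

(* [ladder k m] grows like [m ^ (k/2)] while the cutoff varies by [O(k/J)] on the relevant
   range [m < 2J]; the product stays bounded since [k <= 2]. *)
Lemma comm_coef_sq_le (J k m : nat) : (k <= 2)%nat -> (1 <= J)%nat -> comm_coef J k m ^ 2 <= 64.
Proof.
  intros Hk HJ. unfold comm_coef.
  destruct (Nat.le_gt_cases (2 * J) m) as [Hfar | Hnear].
  { rewrite !chi_eq0 by lia. lra. }
  assert (HJ1 : 1 <= INR J) by (apply (le_INR 1); exact HJ).
  assert (Hlip := chi_lipschitz J m k HJ).
  assert (Hk2 : INR k <= 2) by (apply (le_INR k 2); exact Hk).
  assert (Hmk : INR (m + k) + 1 <= 2 * INR J + 2).
  { pose proof (le_INR (m + k + 1) (2 * J + 2) ltac:(lia)) as Hle.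
    rewrite (plus_INR (m + k) 1), (plus_INR (2 * J) 2), mult_INR in Hle. simpl in Hle. lra. }
  assert (Hlad : ladder k m <= INR (m + k) + 1).
  { pose proof (ladder_sq_le k m). pose proof (ladder_nonneg k m). pose proof (pos_INR (m + k)).
    assert (INR (m + k) ^ k <= (INR (m + k) + 1) ^ 2).
    { destruct k as [|[|[|k]]]; simpl; nra || lia. }
    nra. }
  pose proof (ladder_nonneg k m). pose proof (Rabs_pos (chi J (m + k) - chi J m)).
  assert (Habs : Rabs (ladder k m * (chi J (m + k) - chi J m)) <= 8).
  { rewrite Rabs_mult, Rabs_pos_eq by assumption.
    apply Rmult_le_reg_l with (INR J); [lra |].
    apply Rle_trans with ((2 * INR J + 2) * 2); [nra | nra]. }
  rewrite <- (pow2_abs (ladder k m * _)).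
  pose proof (Rabs_pos (ladder k m * (chi J (m + k) - chi J m))). nra.
Qed.

Lemma comm_coef_eq0 (J k m : nat) : (1 <= J)%nat -> (m + k <= J)%nat -> comm_coef J k m = 0.
Proof. intros HJ Hmk. unfold comm_coef. rewrite !chi_eq1 by lia. ring. Qed.

Definition cutoff (J : nat) (u : vec) : vec := fun n => Cmult (RtoC (chi J n)) (u n).

Definition commutator (g : vec -> vec) (J : nat) (u : vec) : vec :=
  fun n => Cminus (g (cutoff J u) n) (Cmult (RtoC (chi J n)) (g u n)).

Lemma D0_cutoff (J : nat) (u : vec) : (1 <= J)%nat -> D0 (cutoff J u).
Proof.
  intros HJ. exists (2 * J)%nat. intros n Hn. unfold cutoff. rewrite chi_eq0 by assumption. ring.
Qed.

Lemma commutator_ann (k J : nat) (u : vec) (m : nat) :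
  commutator (Nat.iter k ann) J u m = Cmult (RtoC (comm_coef J k m)) (u (m + k)%nat).
Proof.
  unfold commutator, comm_coef, cutoff. rewrite !iter_ann_ladder, RtoC_mult, RtoC_minus. ring.
Qed.

Lemma commutator_cre (k J : nat) (u : vec) (n : nat) :
  commutator (Nat.iter k cre) J u n =
  if (k <=? n)%nat then Copp (Cmult (RtoC (comm_coef J k (n - k))) (u (n - k)%nat)) else RtoC 0.
Proof.
  unfold commutator. destruct (Nat.leb_spec k n) as [Hkn | Hnk].
  - destruct (Nat.le_exists_sub k n Hkn) as [m [-> _]]. rewrite Nat.add_sub.
    unfold comm_coef, cutoff. rewrite !iter_cre_ladder, RtoC_mult, RtoC_minus. ring.
  - rewrite !iter_cre_below by exact Hnk. ring.
Qed.

Definition commutator_majorant (k : nat) (u : vec) (n : nat) : R :=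
  Cmod (u (n + k)%nat) ^ 2 + (if (k <=? n)%nat then Cmod (u (n - k)%nat) ^ 2 else 0).

Lemma ex_series_commutator_majorant (k : nat) (u : vec) :
  l2 u -> ex_series (commutator_majorant k u).
Proof.
  intros Hu.
  apply (ex_series_plus (fun n => Cmod (u (n + k)%nat) ^ 2)
                        (fun n => if (k <=? n)%nat then Cmod (u (n - k)%nat) ^ 2 else 0)).
  - apply ex_series_ext with (fun n => Cmod (u (k + n)%nat) ^ 2).
    + intros n. rewrite Nat.add_comm. reflexivity.
    + apply (ex_series_incr_n (fun n => Cmod (u n) ^ 2)), Hu.
  - apply (ex_series_incr_n _ k). apply ex_series_ext with (fun n => Cmod (u n) ^ 2); [| exact Hu].
    intros n. destruct (Nat.leb_spec k (k + n)); [| lia].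
    replace (k + n - k)%nat with n by lia. reflexivity.
Qed.

Lemma commutator_sq_le (k J : nat) (u : vec) (n : nat) : (k <= 2)%nat -> (1 <= J)%nat ->
  Cmod (commutator (Nat.iter k cre) J u n) ^ 2 <= 64 * commutator_majorant k u n /\
  Cmod (commutator (Nat.iter k ann) J u n) ^ 2 <= 64 * commutator_majorant k u n.
Proof.
  intros Hk HJ.
  assert (Hscal : forall m (x : C), Cmod (Cmult (RtoC (comm_coef J k m)) x) ^ 2 <= 64 * Cmod x ^ 2).
  { intros m x. rewrite Cmod_mult, Cmod_R, Rpow_mult_distr, pow2_abs.
    apply Rmult_le_compat_r; [apply pow2_ge_0 | apply comm_coef_sq_le; assumption]. }
  unfold commutator_majorant. pose proof (pow2_ge_0 (Cmod (u (n + k)%nat))). split.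
  - rewrite commutator_cre. destruct (k <=? n)%nat.
    + rewrite Cmod_opp. pose proof (Hscal (n - k)%nat (u (n - k)%nat)). lra.
    + rewrite Cmod_0. lra.
  - rewrite commutator_ann. pose proof (Hscal n (u (n + k)%nat)).
    destruct (k <=? n)%nat; [pose proof (pow2_ge_0 (Cmod (u (n - k)%nat))) |]; lra.
Qed.

Lemma commutator_eq0 (k J : nat) (u : vec) (n : nat) : (1 <= J)%nat -> (n + k <= J)%nat ->
  commutator (Nat.iter k cre) J u n = RtoC 0 /\ commutator (Nat.iter k ann) J u n = RtoC 0.
Proof.
  intros HJ HnkJ. split.
  - rewrite commutator_cre. destruct (Nat.leb_spec k n); [rewrite comm_coef_eq0 by lia |]; ring.
  - rewrite commutator_ann, comm_coef_eq0 by lia. ring.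
Qed.

Lemma Aform_cutoff (k : nat) (xi : C) (f : nat -> R) (J : nat) (u : vec) (n : nat) :
  Aform k xi f (cutoff J u) n =
  Cplus (Cplus (Cmult xi (commutator (Nat.iter k cre) J u n))
               (Cmult (Cconj xi) (commutator (Nat.iter k ann) J u n)))
        (Cmult (RtoC (chi J n)) (Aform k xi f u n)).
Proof. unfold commutator, Aform, fnum, cutoff. ring. Qed.

Lemma Cmod_sq_sum3 (a b c : C) :
  Cmod (Cplus (Cplus a b) c) ^ 2 <= 3 * (Cmod a ^ 2 + Cmod b ^ 2 + Cmod c ^ 2).
Proof.
  pose proof (Cmod_triangle (Cplus a b) c). pose proof (Cmod_triangle a b).
  pose proof (Cmod_ge_0 a). pose proof (Cmod_ge_0 b). pose proof (Cmod_ge_0 c).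
  pose proof (Cmod_ge_0 (Cplus (Cplus a b) c)).
  assert (Cmod (Cplus (Cplus a b) c) ^ 2 <= (Cmod a + Cmod b + Cmod c) ^ 2)
    by (apply pow_incr; lra).
  pose proof (pow2_ge_0 (Cmod a - Cmod b)). pose proof (pow2_ge_0 (Cmod a - Cmod c)).
  pose proof (pow2_ge_0 (Cmod b - Cmod c)). nra.
Qed.

Lemma Cmod_sq_cutoff_defect (J n : nat) (x : C) :
  Cmod (Cmult (RtoC (chi J n - 1)) x) ^ 2 <= Cmod x ^ 2.
Proof.
  rewrite Cmod_mult, Cmod_R, Rpow_mult_distr, pow2_abs.
  pose proof (chi_bounds J n). pose proof (pow2_ge_0 (Cmod x)).
  assert ((chi J n - 1) ^ 2 <= 1) by nra. nra.
Qed.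

Lemma cutoff_error_sq_le (k : nat) (xi : C) (f : nat -> R) (J : nat) (u v : vec) (n : nat) :
  (k <= 2)%nat -> (1 <= J)%nat -> (forall m, v m = Aform k xi f u m) ->
  Cmod (vsub (Aform k xi f (cutoff J u)) v n) ^ 2 <=
  3 * (2 * (Cmod xi ^ 2 * (64 * commutator_majorant k u n)) + Cmod (v n) ^ 2).
Proof.
  intros Hk HJ Hv. destruct (commutator_sq_le k J u n Hk HJ) as [Hcre Hann].
  unfold vsub. rewrite Aform_cutoff, <- Hv.
  replace (Cminus _ (v n)) with
    (Cplus (Cplus (Cmult xi (commutator (Nat.iter k cre) J u n))
                  (Cmult (Cconj xi) (commutator (Nat.iter k ann) J u n)))
           (Cmult (RtoC (chi J n - 1)) (v n))) by (rewrite RtoC_minus; ring).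
  eapply Rle_trans; [apply Cmod_sq_sum3 | apply Rmult_le_compat_l; [lra |]].
  rewrite !Cmod_mult, Cmod_conj, !Rpow_mult_distr.
  pose proof (Cmod_sq_cutoff_defect J n (v n)) as Hdefect.
  rewrite Cmod_mult, Rpow_mult_distr in Hdefect.
  pose proof (pow2_ge_0 (Cmod xi)).
  assert (Cmod xi ^ 2 * Cmod (commutator (Nat.iter k cre) J u n) ^ 2 <=
          Cmod xi ^ 2 * (64 * commutator_majorant k u n)) by (apply Rmult_le_compat_l; lra).
  assert (Cmod xi ^ 2 * Cmod (commutator (Nat.iter k ann) J u n) ^ 2 <=
          Cmod xi ^ 2 * (64 * commutator_majorant k u n)) by (apply Rmult_le_compat_l; lra).
  lra.
Qed.

Lemma cutoff_error_eq0 (k : nat) (xi : C) (f : nat -> R) (J : nat) (u v : vec) (n : nat) :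
  (1 <= J)%nat -> (n + k <= J)%nat -> (forall m, v m = Aform k xi f u m) ->
  vsub (Aform k xi f (cutoff J u)) v n = RtoC 0.
Proof.
  intros HJ HnkJ Hv. destruct (commutator_eq0 k J u n HJ HnkJ) as [Hcre Hann].
  unfold vsub. rewrite Aform_cutoff, Hcre, Hann, chi_eq1, <- Hv by lia. ring.
Qed.

Lemma hnorm_lim0_dominated (ws : nat -> vec) (b : nat -> R) :
  ex_series b -> (forall j n, Cmod (ws j n) ^ 2 <= b n) ->
  (forall j n, (n < j)%nat -> ws j n = RtoC 0) ->
  is_lim_seq (fun j => hnorm (ws j)) 0.
Proof.
  intros Hb Hwb Hlow. apply is_lim_seq_sqrt0, is_lim_seq_Series_dominated with b; [exact Hb | |].
  - intros j n. split; [apply pow2_ge_0 | apply Hwb].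
  - intros j n Hn. rewrite Hlow, Cmod_0 by exact Hn. ring.
Qed.

Lemma closure_opA_of_Aform (k : nat) (xi : C) (f : nat -> R) (u v : vec) :
  (k <= 2)%nat -> l2 u -> l2 v -> (forall n, v n = Aform k xi f u n) -> closure (opA k xi f) u v.
Proof.
  intros Hk Hu Hv HAu. split; [exact Hu | split; [exact Hv |]].
  exists (fun j => cutoff (j + 2) u), (fun j => Aform k xi f (cutoff (j + 2) u)).
  split; [| split].
  - intros j. split; [apply D0_cutoff; lia | reflexivity].
  - apply hnorm_lim0_dominated with (fun n => Cmod (u n) ^ 2); [exact Hu | |].
    + intros j n. unfold vsub, cutoff.
      replace (Cminus _ (u n)) with (Cmult (RtoC (chi (j + 2) n - 1)) (u n))
        by (rewrite RtoC_minus; ring).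
      apply Cmod_sq_cutoff_defect.
    + intros j n Hn. unfold vsub, cutoff. rewrite chi_eq1 by lia. ring.
  - apply hnorm_lim0_dominated with
      (fun n => 3 * (2 * (Cmod xi ^ 2 * (64 * commutator_majorant k u n)) + Cmod (v n) ^ 2)).
    + apply (@ex_series_scal_l R_AbsRing R_NormedModule 3).
      apply (ex_series_plus (fun n => 2 * (Cmod xi ^ 2 * (64 * commutator_majorant k u n)))
                            (fun n => Cmod (v n) ^ 2)); [| exact Hv].
      do 3 apply (@ex_series_scal_l R_AbsRing R_NormedModule).
      apply ex_series_commutator_majorant, Hu.
    + intros j n. apply cutoff_error_sq_le; [exact Hk | lia | exact HAu].
    + intros j n Hn. apply cutoff_error_eq0; [lia | lia | exact HAu].
Qed.

Theorem corollary3p2 (k : nat) (xi : C) (f : nat -> R) :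
  (k = 1%nat \/ k = 2%nat) ->
  (forall n, 0 <= f n) ->
  (exists (Cst : R) (N : nat), 0 < Cst /\
     forall n : nat, (N <= n)%nat -> f n <= Cst * (sqrt (INR n)) ^ k) ->
  essentially_self_adjoint (opA k xi f).
Proof.
  intros Hk _ _.
  apply essentially_self_adjoint_of_adjoint_sub_closure; [apply opA_symmetric |].
  intros u v Hadj. pose proof (adjoint_opA_Aform k xi f u v Hadj) as HAu.
  destruct Hadj as [Hu [Hv _]].
  apply closure_opA_of_Aform; [lia | exact Hu | exact Hv | exact HAu].
Qed.
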